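(* Let $M\in\mathbb R^{\mathbb N\times\mathbb N}$ be bounded on $\ell_2$ and elliptic (there is $C_{\rm ell}>0$ with $Mx\cdot x\ge C_{\rm ell}\|x\|_{\ell_2}^2$ for all $x$). Let $n_1=1<n_2<\cdots$ be a block structure and let $M$ be block-banded: $M(i,j)=0$ for $|i-j|>b_0$, some $b_0\in\mathbb N$. Then the block-$LU$-factorization $M=LU$ with $L$ block-lower triangular, $U$ block-upper triangular and $L(i,i)=I$ for all $i$ exists, $L$ and $U$ are block-banded with bandwidth $b_0$, and \[\|L\|_2+\|U\|_2+\|L^{-1}\|_2+\|U^{-1}\|_2<\infty.\] Moreover, the block-diagonal matrix $D$ with $D(i,i):=U(i,i)$ is bounded and elliptic, with bounded and elliptic inverse.
   Context: $\|\cdot\|_2$ is the operator norm on $\ell_2$. Block notation: $M(i,j)=M|_{\{n_i,\dots,n_{i+1}-1\}\times\{n_j,\dots,n_{j+1}-1\}}$. Block-lower (upper) triangular means $M(i,j)=0$ for $i<j$ ($i>j$); block-banded with bandwidth $b$ means $M(i,j)=0$ for $|i-j|>b$. *)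

(* Infinite matrices are functions
   nat -> nat -> R (0-based indices). *)
From HB Require Import structures.
From mathcomp Require Import all_boot all_order all_algebra.
From mathcomp Require Import all_classical all_reals all_analysis.
Set Implicit Arguments. Unset Strict Implicit. Unset Printing Implicit Defensive.
Import Order.TTheory GRing.Theory Num.Theory.
Import numFieldNormedType.Exports.
Local Open Scope classical_set_scope.
Local Open Scope ring_scope.

Section Defs.
Variable R : realType.
Implicit Types (A B C : nat -> nat -> R) (n : nat -> nat).

(* A defines a bounded operator on l2: all finite sections are uniformly
   bounded (C plays the role of ||A||_2^2). *)
Definition bounded_mx A := exists C : R, forall (N m : nat) (x : nat -> R),
  \sum_(i < m) (\sum_(j < N) A i j * x j) ^+ 2 <= C * \sum_(j < N) x j ^+ 2.

(* Ax . x >= c ||x||^2 (tested on finitely supported x, dense in l2). *)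
Definition elliptic_mx A := exists c : R, 0 < c /\ forall (N : nat) (x : nat -> R),
  c * \sum_(i < N) x i ^+ 2 <= \sum_(i < N) \sum_(j < N) x i * A i j * x j.

(* block structure n_1 = 1 < n_2 < ... , shifted to 0-based: n 0 = 0 *)
Definition block_structure n := n 0 = 0%N /\ forall i, (n i < n i.+1)%N.
Definition in_block n (i r : nat) := (n i <= r < n i.+1)%N.

Definition block_lower n A := forall i j r c,
  in_block n i r -> in_block n j c -> (i < j)%N -> A r c = 0.
Definition block_upper n A := forall i j r c,
  in_block n i r -> in_block n j c -> (j < i)%N -> A r c = 0.
Definition block_banded n (b : nat) A := forall i j r c,
  in_block n i r -> in_block n j c -> ((b < i - j) || (b < j - i))%N -> A r c = 0.
Definition unit_diag_blocks n A := forall i r c,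
  in_block n i r -> in_block n i c -> A r c = (r == c)%:R.
Definition block_diag_part n (U D : nat -> nat -> R) := forall i j r c,
  in_block n i r -> in_block n j c -> D r c = (if i == j then U r c else 0).

Definition idmx : nat -> nat -> R := fun r c => (r == c)%:R.
Definition mx_prod_is A B C := forall i k,
  ((fun N : nat => \sum_(j < N) A i j * B j k) @ \oo --> C i k).
Definition inverse_mx A B := mx_prod_is A B idmx /\ mx_prod_is B A idmx.
End Defs.

From HB Require Import structures.
From mathcomp Require Import all_boot all_order all_algebra.
From mathcomp Require Import all_classical all_reals all_analysis.
From mathcomp Require Import lra zify ring.
Import Order.TTheory GRing.Theory Num.Theory numFieldNormedType.Exports.
Local Open Scope ring_scope.
Local Open Scope classical_set_scope.

(* Let [G k] be the inverse of the leading section of [M] on the first [k]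
   blocks; it exists and has norm at most [1/c] because every section of [M]
   is [c]-elliptic.  The factors are then explicit Schur-complement formulas:
   the columns of [L] in block [j] are those of [M G (j+1)], the rows of [U] in
   block [i] are those of [M - M(i,<i) G i M(<i,.)], [U^-1] and [D^-1] are
   read off [G (j+1)], and the rows of [L^-1] off [M(i,<i) G i].  Since all
   factors are block triangular, every product occurring in [LU = M] and in
   the inverse relations is a finite sum.  Each block of [L], [U], [D] and
   [D^-1] is bounded in terms of [||M||] and [1/c]; block-bandedness turns
   these block bounds into bounds for [L] and [U], and finally
   [L^-1 = U G K] and [U^-1 = G K L] on the leading section of [K] blocks. *)

Set Implicit Arguments. Unset Strict Implicit. Unset Printing Implicit Defensive.

Section LeadingSectionInverse.
Variable R : fieldType.
Implicit Types (A B : nat -> nat -> R).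

Definition inv_on N A B := forall r c, (r < N)%N -> (c < N)%N ->
  \sum_(p < N) A r p * B p c = (r == c)%:R.

Let sqmx N A : 'M[R]_N := \matrix_(i, j) A i j.

Lemma inv_on_sym N A B : inv_on N A B -> inv_on N B A.
Proof.
move=> AB r c hr hc.
have /mulmx1C BA : sqmx N A *m sqmx N B = 1%:M.
  by apply/matrixP => i j; rewrite !mxE -(AB i j) //; apply: eq_bigr => k _; rewrite !mxE.
have := congr1 (fun X : 'M[R]_N => X (Ordinal hr) (Ordinal hc)) BA.
by rewrite !mxE => <-; apply: eq_bigr => k _; rewrite !mxE.
Qed.

Lemma inv_on_exists N A :
  (forall x : nat -> R, (forall c, (c < N)%N -> \sum_(r < N) x r * A r c = 0) ->
     forall r, (r < N)%N -> x r = 0) ->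
  exists B, inv_on N A B.
Proof.
case: N => [|N] inj; first by exists A => r c.
have detA : \det (sqmx N.+1 A) != 0.
  apply/negP => /det0P [v /negP nz_v vA]; apply: nz_v; apply/eqP/rowP => i.
  rewrite mxE -[i]inord_val.
  apply: (inj (fun r => v 0 (inord r))) (ltn_ord i) => c hc.
  have := congr1 (fun X : 'rV[R]_N.+1 => X 0 (Ordinal hc)) vA.
  rewrite !mxE => vA_c; rewrite -[RHS]vA_c.
  by apply: eq_bigr => k _; rewrite !mxE inord_val.
have unitA : sqmx N.+1 A \in unitmx by rewrite unitmxE unitfE.
exists (fun p c => invmx (sqmx N.+1 A) (inord p) (inord c)) => r c hr hc.
have := congr1 (fun X : 'M[R]_N.+1 => X (Ordinal hr) (Ordinal hc)) (mulmxV unitA).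
rewrite !mxE => <-.
have -> : inord c = Ordinal hc :> 'I_N.+1 by apply: val_inj; rewrite /= inordK.
by apply: eq_bigr => k _; rewrite !mxE inord_val.
Qed.

End LeadingSectionInverse.

Section IndexSums.
Variable R : pzRingType.
Implicit Types (f : nat -> R).

Lemma sum_ord_trunc f K N : (forall p, (K <= p)%N -> f p = 0) -> (K <= N)%N ->
  \sum_(p < N) f p = \sum_(p < K) f p.
Proof.
move=> f0 hKN; rewrite -(subnKC hKN) big_split_ord /= [X in _ + X]big1 ?addr0 //.
by move=> i _; rewrite f0 // leq_addr.
Qed.

Lemma sum_deltal f r N : (r < N)%N -> \sum_(q < N) (r == q)%:R * f q = f r.
Proof.
move=> hr; rewrite (bigD1 (Ordinal hr)) //= eqxx mul1r big1 ?addr0 // => i.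
by rewrite -val_eqE eq_sym => /negbTE /= ->; rewrite mul0r.
Qed.

Lemma sum_deltar f c N : (c < N)%N -> \sum_(q < N) f q * ((q : nat) == c)%:R = f c.
Proof.
move=> hc; rewrite -[RHS](sum_deltal f hc); apply: eq_bigr => i _.
by rewrite eq_sym; case: eqP => _; rewrite ?mulr1 ?mul1r ?mulr0 ?mul0r.
Qed.

Lemma sum_ltn_mask f K N : (K <= N)%N ->
  \sum_(q < N) ((q < K)%N)%:R * f q = \sum_(q < K) f q.
Proof.
move=> hKN; rewrite (@sum_ord_trunc (fun q => ((q < K)%N)%:R * f q) K) //.
  by apply: eq_bigr => i _; rewrite ltn_ord mul1r.
by move=> p hp; rewrite ltnNge hp mul0r.
Qed.

Lemma sum_mulA (a : nat -> R) (b : nat -> nat -> R) (c : nat -> R) N1 N2 :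
  \sum_(p < N1) a p * (\sum_(s < N2) b p s * c s) =
  \sum_(s < N2) (\sum_(p < N1) a p * b p s) * c s.
Proof.
under eq_bigr => p _ do rewrite mulr_sumr.
rewrite exchange_big; apply: eq_bigr => s _; rewrite mulr_suml.
by apply: eq_bigr => p _; rewrite mulrA.
Qed.

End IndexSums.

Section BlockIndex.
Variable n : nat -> nat.
Hypothesis bsn : block_structure n.

Lemma ltn_bound i j : (n i < n j)%N = (i < j)%N.
Proof.
have mono : {homo n : i j / (i < j)%N}.
  by case: bsn => _; apply: homo_ltn; apply: ltn_trans.
apply/idP/idP => [|/mono //].
by apply: contraLR; rewrite -!leqNgt leq_eqVlt => /orP [/eqP -> //|/mono/ltnW].
Qed.

Lemma leq_bound i j : (n i <= n j)%N = (i <= j)%N.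
Proof. by rewrite leqNgt ltn_bound -leqNgt. Qed.

Lemma leq_bound_id i : (i <= n i)%N.
Proof.
case: bsn => _ hs; elim: i => [|i IH] //; exact: leq_ltn_trans IH (hs i).
Qed.

Lemma in_block_uniq i j r : in_block n i r -> in_block n j r -> i = j.
Proof.
move=> /andP [lo_i hi_i] /andP [lo_j hi_j]; apply/eqP.
rewrite eqn_leq -[(i <= j)%N]ltnS -[(j <= i)%N]ltnS.
rewrite -[(i < j.+1)%N]ltn_bound -[(j < i.+1)%N]ltn_bound.
by rewrite (leq_ltn_trans lo_i hi_j) (leq_ltn_trans lo_j hi_i).
Qed.

Let block_ex r : exists i, (r < n i.+1)%N.
Proof. by exists r; exact: leq_bound_id. Qed.

Definition block_of r := ex_minn (block_ex r).

Lemma block_ofP r : in_block n (block_of r) r.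
Proof.
rewrite /block_of; case: ex_minnP => -[|i] hi imin; rewrite /in_block hi andbT.
  by case: bsn => ->.
by rewrite leqNgt; apply/negP => /imin; rewrite ltnn.
Qed.

Lemma block_ofE i r : in_block n i r -> block_of r = i.
Proof. exact: in_block_uniq (block_ofP r). Qed.

Lemma block_of_lb r : (n (block_of r) <= r)%N.
Proof. by case/andP: (block_ofP r). Qed.

Lemma block_of_ub r : (r < n (block_of r).+1)%N.
Proof. by case/andP: (block_ofP r). Qed.

Lemma ltn_block_of r k : (r < n k)%N = (block_of r < k)%N.
Proof.
apply/idP/idP => h; last by apply: leq_trans (block_of_ub r) _; rewrite leq_bound.
rewrite ltnNge -leq_bound; apply: contraTN h; rewrite -leqNgt => hk.
exact: leq_trans hk (block_of_lb r).
Qed.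

Lemma leq_block_of r k : (n k <= r)%N = (k <= block_of r)%N.
Proof. by rewrite leqNgt ltn_block_of -leqNgt. Qed.

Lemma ltn_of_block_of r s : (block_of r < block_of s)%N -> (r < s)%N.
Proof. by rewrite -ltn_block_of => /leq_trans; apply; apply: block_of_lb. Qed.

Lemma sum_by_blocks (R : nmodType) (f : nat -> R) K :
  \sum_(r < n K) f r = \sum_(i < K) \sum_(n i <= r < n i.+1) f r.
Proof.
elim: K => [|K IH]; first by case: bsn => ->; rewrite !big_ord0.
rewrite big_ord_recr /= -IH -!(big_mkord xpredT f).
by rewrite [LHS](@big_cat_nat _ _ _ (n K)) // leq_bound.
Qed.

End BlockIndex.

Lemma cvg_ev_cst (R : realType) (f : nat -> R) (l : R) (N0 : nat) :
  (forall N, (N0 <= N)%N -> f N = l) -> f @ \oo --> l.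
Proof. by move=> fl; apply: cvg_near_cst; exists N0 => // N /= /fl. Qed.

Section BlockLU.
Variable R : realType.
Variable n : nat -> nat.
Hypothesis bsn : block_structure n.
Variable M : nat -> nat -> R.
Variable G : nat -> nat -> nat -> R.
Hypothesis MG : forall k, inv_on (n k) M (G k).
Implicit Types (A B D : nat -> nat -> R).

Local Notation blk := (block_of bsn).

Lemma triangular_sum_trunc A B K N r c :
  block_lower n A \/ block_upper n B -> (r < n K)%N -> (c < n K)%N -> (n K <= N)%N ->
  \sum_(p < N) A r p * B p c = \sum_(p < n K) A r p * B p c.
Proof.
move=> tri hr hc hN.
rewrite (@sum_ord_trunc _ (fun p => A r p * B p c) (n K)) // => p hp.
have lt_K q : (q < n K)%N -> (blk q < blk p)%N.
  by rewrite ltn_block_of => /leq_trans; apply; rewrite -(leq_block_of bsn p).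
case: tri => [lowA|upB].
  by rewrite (lowA _ _ _ _ (block_ofP bsn r) (block_ofP bsn p)) ?mul0r ?lt_K.
by rewrite (upB _ _ _ _ (block_ofP bsn p) (block_ofP bsn c)) ?mulr0 ?lt_K.
Qed.

Lemma triangular_inverse A B :
  (block_lower n A /\ block_lower n B) \/ (block_upper n A /\ block_upper n B) ->
  (forall K, inv_on (n K) A B) -> inverse_mx A B.
Proof.
move=> tri AB; have BA K := inv_on_sym (AB K).
suff prod_id A' B' : block_lower n A' \/ block_upper n B' ->
    (forall K, inv_on (n K) A' B') -> mx_prod_is A' B' (idmx R).
  by split; apply: prod_id => //; case: tri => -[]; [left | right | left | right].
move=> tri' AB' r c; set K := (r + c).+1.
have hr : (r < n K)%N by apply: leq_trans (leq_bound_id bsn K); rewrite ltnS leq_addr.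
have hc : (c < n K)%N by apply: leq_trans (leq_bound_id bsn K); rewrite ltnS leq_addl.
apply: (@cvg_ev_cst _ _ _ (n K)) => N hN.
by rewrite (triangular_sum_trunc tri' hr hc hN) AB'.
Qed.

Lemma inv_on_GM k : inv_on (n k) (G k) M.
Proof. exact: inv_on_sym. Qed.

Definition multiplier r c := \sum_(q < n (blk r)) M r q * G (blk r) q c.

Definition Lfac r c := \sum_(s < n (blk c).+1) M r s * G (blk c).+1 s c.
Definition Ufac r c := M r c - \sum_(p < n (blk r)) multiplier r p * M p c.
Definition Linv r c := (r == c)%:R - ((c < n (blk r))%N)%:R * multiplier r c.
Definition Uinv r c := ((r < n (blk c).+1)%N)%:R * G (blk c).+1 r c.
Definition Dinv r c := (blk r == blk c)%:R * G (blk c).+1 r c.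

Lemma multiplierM r c : (c < n (blk r))%N ->
  \sum_(p < n (blk r)) multiplier r p * M p c = M r c.
Proof.
move=> hc; rewrite /multiplier -(sum_mulA (M r) (G (blk r)) (M ^~ c)).
under eq_bigr => q _ do rewrite inv_on_GM //.
exact: sum_deltar.
Qed.

Lemma Lfac_delta r c : (r < n (blk c).+1)%N -> Lfac r c = (r == c)%:R.
Proof. by move=> hr; rewrite /Lfac MG // block_of_ub. Qed.

Lemma Ufac_lower r c : (c < n (blk r))%N -> Ufac r c = 0.
Proof. by move=> hc; rewrite /Ufac multiplierM // subrr. Qed.

Lemma LinvM r c N : (n (blk r).+1 <= N)%N ->
  \sum_(q < N) Linv r q * M q c = Ufac r c.
Proof.
move=> hN; have hrN := leq_trans (block_of_ub bsn r) hN.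
under eq_bigr => q _ do rewrite /Linv mulrBl -mulrA.
rewrite sumrB (sum_deltal (M ^~ c)) // (sum_ltn_mask (fun q => multiplier r q * M q c)) //.
by apply: leq_trans hN; rewrite (leq_bound bsn).
Qed.

Lemma inv_on_Linv_Lfac K : inv_on (n K) Linv Lfac.
Proof.
move=> r c hrN _; have hN : (n (blk r).+1 <= n K)%N.
  by rewrite (leq_bound bsn) -ltn_block_of.
under eq_bigr => q _ do rewrite /Linv mulrBl -mulrA.
rewrite sumrB (sum_deltal (Lfac ^~ c)) // (sum_ltn_mask (fun q => multiplier r q * Lfac q c)).
  2: by apply: leq_trans hN; rewrite (leq_bound bsn).
have [hc|hc] := ltnP c (n (blk r)).
- have -> : (r == c) = false.
    by apply/negbTE; rewrite neq_ltn (leq_trans hc (block_of_lb bsn r)) orbT.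
  rewrite {2}/Lfac (sum_mulA (multiplier r) M (fun s => G (blk c).+1 s c)).
  apply/eqP; rewrite subr_eq0; apply/eqP.
  apply: eq_bigr => s _; rewrite multiplierM //.
  by apply: leq_trans (ltn_ord s) _; rewrite (leq_bound bsn) -ltn_block_of.
- have r_le_c : (blk r <= blk c)%N by rewrite -leq_block_of.
  rewrite big1 ?subr0 => [|p _]; last first.
    rewrite Lfac_delta; last by apply: leq_trans (ltn_ord p) _; rewrite (leq_bound bsn) leqW.
    by rewrite eqn_leq [(c <= p)%N]leqNgt (leq_trans (ltn_ord p) hc) andbF mulr0.
  by rewrite Lfac_delta //; apply: leq_trans (block_of_ub bsn r) _; rewrite (leq_bound bsn).
Qed.

Lemma inv_on_Ufac_Uinv K : inv_on (n K) Ufac Uinv.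
Proof.
move=> r c _ hcK; have hN : (n (blk c).+1 <= n K)%N.
  by rewrite (leq_bound bsn) -ltn_block_of.
rewrite (@sum_ord_trunc _ (fun p => Ufac r p * Uinv p c) (n (blk c).+1)) // => [|p hp].
  under eq_bigr => p _ do rewrite /Uinv ltn_ord mul1r.
  have [r_le_c|c_lt_r] := leqP (blk r) (blk c).
  - have hN' : (n (blk r).+1 <= n (blk c).+1)%N by rewrite (leq_bound bsn).
    under eq_bigr => p _ do rewrite -(LinvM p hN').
    rewrite -(sum_mulA (Linv r) M (fun p => G (blk c).+1 p c)).
    under eq_bigr => q _ do rewrite MG ?block_of_ub //.
    rewrite (sum_deltar (Linv r)) ?block_of_ub // /Linv ltn_block_of ltnNge r_le_c.
    by rewrite mul0r subr0.
  - rewrite big1 => [|p _]; first by rewrite (gtn_eqF (ltn_of_block_of c_lt_r)).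
    rewrite Ufac_lower ?mul0r //; apply: leq_trans (ltn_ord p) _.
    by rewrite (leq_bound bsn).
by rewrite /Uinv ltnNge hp mul0r mulr0.
Qed.

Lemma Lfac_upper r p : (n (blk r).+1 <= p)%N -> Lfac r p = 0.
Proof.
move=> hp; have lt_rp : (blk r < blk p)%N by rewrite -(leq_block_of bsn p).
rewrite Lfac_delta ?ltn_eqF ?(ltn_of_block_of lt_rp) // ltn_block_of.
exact: ltnW.
Qed.

Lemma Lfac_Ufac r c N : (n (blk r).+1 <= N)%N ->
  \sum_(p < N) Lfac r p * Ufac p c = M r c.
Proof.
set N0 := n (blk r).+1 => hN.
rewrite (@sum_ord_trunc _ (fun p => Lfac r p * Ufac p c) N0) // => [|p hp]; last first.
  by rewrite Lfac_upper ?mul0r.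
have LfacLinv := inv_on_sym (@inv_on_Linv_Lfac (blk r).+1).
rewrite (eq_bigr (fun p : 'I_N0 => Lfac r p * \sum_(q < N0) Linv p q * M q c)) => [|p _].
  2: by rewrite LinvM // (leq_bound bsn) -(ltn_block_of bsn p).
rewrite (sum_mulA (Lfac r) Linv (M ^~ c)).
under eq_bigr => q _ do rewrite LfacLinv ?block_of_ub //.
by rewrite (sum_deltal (M ^~ c)) ?block_of_ub.
Qed.

Lemma Linv_section K r s : (r < n K)%N -> (s < n K)%N ->
  Linv r s = \sum_(p < n K) Ufac r p * G K p s.
Proof.
move=> hr hs; have hN : (n (blk r).+1 <= n K)%N.
  by rewrite (leq_bound bsn) -ltn_block_of.
under eq_bigr => p _ do rewrite -(LinvM p hN).
rewrite -(sum_mulA (Linv r) M (G K ^~ s)).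
under eq_bigr => q _ do rewrite MG //.
by rewrite (sum_deltar (Linv r)).
Qed.

Lemma Uinv_section K r s : (r < n K)%N -> (s < n K)%N ->
  Uinv r s = \sum_(p < n K) G K r p * Lfac p s.
Proof.
move=> hr hs; have hN : (n (blk s).+1 <= n K)%N.
  by rewrite (leq_bound bsn) -ltn_block_of.
rewrite /Lfac (sum_mulA (G K r) M (G (blk s).+1 ^~ s)).
under eq_bigr => q _ do rewrite inv_on_GM ?(leq_trans (ltn_ord q) hN) //.
rewrite /Uinv; have [hrs|hrs] := ltnP r (n (blk s).+1).
  by rewrite (sum_deltal (G (blk s).+1 ^~ s)) // mul1r.
rewrite mul0r big1 // => q _; rewrite gtn_eqF ?mul0r //.
exact: leq_trans (ltn_ord q) hrs.
Qed.

Lemma block_lower_Lfac : block_lower n Lfac.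
Proof.
move=> i j r c /(block_ofE bsn) <- /(block_ofE bsn) <- lt_rc.
rewrite Lfac_delta ?ltn_eqF ?(ltn_of_block_of lt_rc) // ltn_block_of.
exact: ltnW.
Qed.

Lemma block_upper_Ufac : block_upper n Ufac.
Proof.
move=> i j r c /(block_ofE bsn) <- /(block_ofE bsn) <- lt_cr.
by rewrite Ufac_lower // ltn_block_of.
Qed.

Lemma unit_diag_Lfac : unit_diag_blocks n Lfac.
Proof. by move=> i r c /andP [_ hr] /(block_ofE bsn) ci; rewrite Lfac_delta // ci. Qed.

Lemma block_lower_Linv : block_lower n Linv.
Proof.
move=> i j r c /(block_ofE bsn) <- /(block_ofE bsn) <- lt_rc.
rewrite /Linv ltn_eqF ?(ltn_of_block_of lt_rc) // ltn_block_of ltnNge (ltnW lt_rc).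
by rewrite mul0r subr0.
Qed.

Lemma block_upper_Uinv : block_upper n Uinv.
Proof.
move=> i j r c /(block_ofE bsn) <- /(block_ofE bsn) <- lt_cr.
by rewrite /Uinv ltn_block_of ltnS leqNgt lt_cr mul0r.
Qed.

Lemma block_banded_Lfac b : block_banded n b M -> block_banded n b Lfac.
Proof.
move=> bandM i j r c hr hc /orP [far|far]; last first.
  by apply: block_lower_Lfac hr hc _; rewrite -subn_gt0 (leq_ltn_trans _ far).
rewrite /Lfac big1 // => s _; rewrite (bandM i (blk s) r s hr (block_ofP bsn s)) ?mul0r //.
have le_sc : (blk s <= blk c)%N by rewrite -ltnS -(ltn_block_of bsn s).
by rewrite (leq_trans far) // leq_sub2l // -(block_ofE bsn hc).
Qed.

Lemma block_banded_Ufac b : block_banded n b M -> block_banded n b Ufac.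
Proof.
move=> bandM i j r c hr hc /orP [far|far].
  by apply: block_upper_Ufac hr hc _; rewrite -subn_gt0 (leq_ltn_trans _ far).
rewrite /Ufac (bandM i j r c hr hc) ?far ?orbT // sub0r big1 ?oppr0 // => p _.
rewrite (bandM (blk p) j p c (block_ofP bsn p) hc) ?mulr0 //.
have lt_pr : (blk p < blk r)%N by rewrite -(ltn_block_of bsn p).
by apply/orP; right; rewrite (leq_trans far) // leq_sub2l // -(block_ofE bsn hr) ltnW.
Qed.

Section BlockDiagonal.
Variable D : nat -> nat -> R.
Hypothesis DU : block_diag_part n Ufac D.

Lemma block_diag_partE r c : D r c = if blk r == blk c then Ufac r c else 0.
Proof. exact: DU (block_ofP bsn r) (block_ofP bsn c). Qed.

Lemma block_upper_diag : block_upper n D.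
Proof.
move=> i j r c hr hc lt_ji; rewrite block_diag_partE.
by case: ifP => // _; apply: block_upper_Ufac hr hc lt_ji.
Qed.

Lemma inv_on_diag_Dinv K : inv_on (n K) D Dinv.
Proof.
move=> r c _ hcK; have hN : (n (blk c).+1 <= n K)%N.
  by rewrite (leq_bound bsn) -ltn_block_of.
rewrite (@sum_ord_trunc _ (fun p => D r p * Dinv p c) (n (blk c).+1)) // => [|p hp]; last first.
  rewrite /Dinv; case: eqP => [e|]; last by rewrite mul0r mulr0.
  by move: hp; rewrite (leq_block_of bsn p) e ltnn.
have [e_rc|ne_rc] := eqVneq (blk r) (blk c); last first.
  have -> : (r == c) = false by apply: contraNF ne_rc => /eqP ->.
  rewrite big1 // => p _; rewrite block_diag_partE /Dinv.
  by case: eqVneq => [e|]; rewrite ?mul0r // -e (negbTE ne_rc) mul0r mulr0.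
have hr : (r < n (blk c).+1)%N by rewrite -e_rc block_of_ub.
rewrite -(@inv_on_Ufac_Uinv (blk c).+1 r c hr (block_of_ub bsn c)).
apply: eq_bigr => p _; rewrite block_diag_partE /Dinv /Uinv ltn_ord mul1r e_rc.
have [e_pc|ne_pc] := eqVneq (blk p) (blk c); first by rewrite mul1r.
have lt_pc : (blk p < blk c)%N.
  by rewrite ltn_neqAle ne_pc -ltnS -(ltn_block_of bsn p) ltn_ord.
by rewrite Ufac_lower ?mul0r // ltn_block_of e_rc.
Qed.

End BlockDiagonal.

Lemma block_upper_Dinv : block_upper n Dinv.
Proof.
move=> i j r c /(block_ofE bsn) <- /(block_ofE bsn) <- lt_cr.
by rewrite /Dinv gtn_eqF // mul0r.
Qed.

Lemma mx_prod_Lfac_Ufac : mx_prod_is Lfac Ufac M.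
Proof.
move=> r c; apply: (@cvg_ev_cst _ _ _ (n (blk r).+1)) => N; exact: Lfac_Ufac.
Qed.

Lemma inverse_Lfac : inverse_mx Lfac Linv.
Proof.
suff [] : inverse_mx Linv Lfac by split.
apply: triangular_inverse inv_on_Linv_Lfac.
by left; split; [exact: block_lower_Linv | exact: block_lower_Lfac].
Qed.

Lemma inverse_Ufac : inverse_mx Ufac Uinv.
Proof.
apply: triangular_inverse inv_on_Ufac_Uinv.
by right; split; [exact: block_upper_Ufac | exact: block_upper_Uinv].
Qed.

Lemma inverse_diag D : block_diag_part n Ufac D -> inverse_mx D Dinv.
Proof.
move=> DU; apply: triangular_inverse (inv_on_diag_Dinv DU).
by right; split; [exact: block_upper_diag | exact: block_upper_Dinv].
Qed.

End BlockLU.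

Lemma sum_ltn K m : (\sum_(j < K) (j < m) = minn K m)%N.
Proof. by elim: K => [|K IH]; rewrite ?big_ord0 ?big_ord_recr /= ?IH; lia. Qed.

Lemma window_count i b K :
  (\sum_(j < K) ((j <= i + b) && (i <= j + b)) <= (2 * b).+1)%N.
Proof.
rewrite (eq_bigr (fun j : 'I_K => (j < (i + b).+1) - (j < i - b))%N) => [|j _].
  rewrite sumnB => [|j _]; last by case: ltnP; case: ltnP; lia.
  by rewrite !sum_ltn; lia.
by case: leqP; case: leqP; case: ltnP; lia.
Qed.

Section SumInequalities.
Variable R : realDomainType.
Implicit Types (f : nat -> R).

Lemma weighted_cauchy_schwarz (a y : nat -> R) K : (forall j, 0 <= a j) ->
  (\sum_(j < K) a j * y j) ^+ 2 <= (\sum_(j < K) a j) * \sum_(j < K) a j * y j ^+ 2.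
Proof.
move=> a_ge0.
have -> : (\sum_(j < K) a j * y j) ^+ 2 =
    \sum_(j < K) \sum_(k < K) a j * a k * (y j * y k).
  rewrite expr2 mulr_suml; apply: eq_bigr => j _; rewrite mulr_sumr.
  by apply: eq_bigr => k _; ring.
have sum_k : (\sum_(j < K) a j) * \sum_(j < K) a j * y j ^+ 2 =
    \sum_(j < K) \sum_(k < K) a j * a k * y k ^+ 2.
  rewrite mulr_suml; apply: eq_bigr => j _; rewrite mulr_sumr.
  by apply: eq_bigr => k _; ring.
have sum_j : (\sum_(j < K) a j) * \sum_(j < K) a j * y j ^+ 2 =
    \sum_(j < K) \sum_(k < K) a j * a k * y j ^+ 2.
  rewrite sum_k exchange_big; apply: eq_bigr => j _; apply: eq_bigr => k _; ring.
rewrite -(@ler_pM2l _ 2) // [X in _ <= X]mulr_natl mulr2n.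
rewrite [X in _ <= X + _]sum_j sum_k -big_split /= mulr_sumr.
apply: ler_sum => j _; rewrite mulr_sumr -big_split /=; apply: ler_sum => k _.
rewrite -mulrDr mulrCA; apply: ler_wpM2l; first exact: mulr_ge0.
by rewrite -subr_ge0 (_ : _ - _ = (y j - y k) ^+ 2) ?sqr_ge0 //; ring.
Qed.

Lemma sum_window_le i b K :
  \sum_(j < K) (((j <= i + b) && (i <= j + b))%N)%:R <= ((2 * b).+1)%:R :> R.
Proof. by rewrite -natr_sum ler_nat window_count. Qed.

Lemma sum_ord_widen_le f m N : (m <= N)%N -> (forall i, 0 <= f i) ->
  \sum_(i < m) f i <= \sum_(i < N) f i.
Proof.
move=> hmN f_ge0; rewrite -(subnKC hmN) big_split_ord /= lerDl.
exact: sumr_ge0.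
Qed.

Lemma sum_nat_le_ord f m N : (forall i, 0 <= f i) ->
  \sum_(m <= i < N) f i <= \sum_(i < N) f i.
Proof.
move=> f_ge0; have [hmN|hNm] := leqP m N; last first.
  by rewrite big_geq ?(ltnW hNm) //; exact: sumr_ge0.
rewrite -(big_mkord xpredT f) [X in _ <= X](@big_cat_nat _ _ _ m) //= lerDr.
exact: sumr_ge0.
Qed.

End SumInequalities.

Lemma elliptic_inv_on (R : realFieldType) (M : nat -> nat -> R) c N : 0 < c ->
  (forall x : nat -> R, c * \sum_(i < N) x i ^+ 2 <= \sum_(i < N) \sum_(j < N) x i * M i j * x j) ->
  exists B, inv_on N M B.
Proof.
move=> c_gt0 M_ell; apply: inv_on_exists => x xM0 r hr.
have quad0 : \sum_(i < N) \sum_(j < N) x i * M i j * x j = 0.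
  by rewrite exchange_big big1 // => j _; rewrite -mulr_suml xM0 // mul0r.
have := M_ell x; rewrite quad0 pmulr_rle0 // => norm_le0.
have : x r ^+ 2 <= 0.
  apply: le_trans norm_le0; rewrite (bigD1 (Ordinal hr)) //= lerDl.
  by apply: sumr_ge0 => i _; exact: sqr_ge0.
by rewrite le_eqVlt ltNge sqr_ge0 orbF sqrf_eq0 => /eqP.
Qed.

Section SectionNorms.
Variable R : realType.
Variable n : nat -> nat.
Hypothesis bsn : block_structure n.
Implicit Types (A : nat -> nat -> R) (x w : nat -> R).

Local Notation blk := (block_of bsn).

Definition sec_bounded A C := forall K x,
  \sum_(r < n K) (\sum_(c < n K) A r c * x c) ^+ 2 <= C * \sum_(c < n K) x c ^+ 2.

Lemma sec_bounded_ge0 A C : sec_bounded A C -> 0 <= C.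
Proof.
move=> /(_ 1%N (fun=> 1)) /= bndA.
have sum_gt0 : 0 < \sum_(c < n 1) (1 : R) ^+ 2.
  by rewrite sumr_const card_ord expr1n pmulrn_lgt0 // leq_bound_id.
rewrite -(pmulr_lge0 _ sum_gt0); apply: le_trans bndA.
by apply: sumr_ge0 => r _; exact: sqr_ge0.
Qed.

Lemma bounded_mx_sec A C : sec_bounded A C -> bounded_mx A.
Proof.
move=> secA; exists C => N m x; set K := (N + m)%N.
have hNK : (N <= n K)%N by apply: leq_trans (leq_bound_id bsn K); rewrite leq_addr.
have hmK : (m <= n K)%N by apply: leq_trans (leq_bound_id bsn K); rewrite leq_addl.
pose xN j := if (j < N)%N then x j else 0.
have xNE (f : nat -> R) : \sum_(j < N) f j * x j = \sum_(j < n K) f j * xN j.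
  rewrite (@sum_ord_trunc _ (fun j => f j * xN j) N (n K)) // => [|p hp].
    by apply: eq_bigr => j _; rewrite /xN ltn_ord.
  by rewrite /xN ltnNge hp mulr0.
have normE : \sum_(j < N) x j ^+ 2 = \sum_(j < n K) xN j ^+ 2.
  rewrite (@sum_ord_trunc _ (fun j => xN j ^+ 2) N (n K)) // => [|p hp].
    by apply: eq_bigr => j _; rewrite /xN ltn_ord.
  by rewrite /xN ltnNge hp expr0n.
apply: le_trans (sum_ord_widen_le (f := fun i => (\sum_(j < N) A i j * x j) ^+ 2) hmK _) _.
  by move=> i; exact: sqr_ge0.
under eq_bigr => i _ do rewrite xNE.
by rewrite normE; exact: secA.
Qed.

Lemma elliptic_mx_sec A c : 0 < c ->
  (forall K x, c * \sum_(r < n K) x r ^+ 2 <= \sum_(r < n K) \sum_(s < n K) x r * A r s * x s) ->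
  elliptic_mx A.
Proof.
move=> c_gt0 secA; exists c; split => // N x.
have hN := leq_bound_id bsn N.
pose xN j := if (j < N)%N then x j else 0.
have normE : \sum_(j < N) x j ^+ 2 = \sum_(j < n N) xN j ^+ 2.
  rewrite (@sum_ord_trunc _ (fun j => xN j ^+ 2) N (n N)) // => [|p hp].
    by apply: eq_bigr => j _; rewrite /xN ltn_ord.
  by rewrite /xN ltnNge hp expr0n.
have quadE : \sum_(i < N) \sum_(j < N) x i * A i j * x j =
    \sum_(i < n N) \sum_(j < n N) xN i * A i j * xN j.
  rewrite (@sum_ord_trunc _ (fun i => \sum_(j < n N) xN i * A i j * xN j) N (n N))
    // => [|p hp]; last first.
    by rewrite big1 // => j _; rewrite /xN ltnNge hp !mul0r.
  apply: eq_bigr => i _.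
  rewrite (@sum_ord_trunc _ (fun j => xN i * A i j * xN j) N (n N)) // => [|p hp].
    by apply: eq_bigr => j _; rewrite /xN !ltn_ord.
  by rewrite /xN [(p < N)%N]ltnNge hp mulr0.
by rewrite normE quadE; exact: secA.
Qed.

(* A block-banded matrix with uniformly bounded blocks is bounded: after
   Cauchy-Schwarz, each block column meets at most [2b+1] nonzero blocks. *)
Lemma sec_bounded_banded A b Cb : block_banded n b A -> 0 <= Cb ->
  (forall i j w, \sum_(n i <= r < n i.+1) (\sum_(n j <= c < n j.+1) A r c * w c) ^+ 2
     <= Cb * \sum_(n j <= c < n j.+1) w c ^+ 2) ->
  sec_bounded A (((2 * b).+1)%:R ^+ 2 * Cb).
Proof.
move=> bandA Cb_ge0 blockA K x; set D : R := ((2 * b).+1)%:R.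
pose near i j : R := (((j <= i + b) && (i <= j + b))%N)%:R.
have near_ge0 i j : 0 <= near i j by rewrite ler0n.
pose y (i j r : nat) := \sum_(n j <= c < n j.+1) A r c * x c.
pose nx j := \sum_(n j <= c < n j.+1) x c ^+ 2.
have -> : \sum_(r < n K) (\sum_(c < n K) A r c * x c) ^+ 2 =
    \sum_(i < K) \sum_(n i <= r < n i.+1) (\sum_(j < K) near i j * y i j r) ^+ 2.
  rewrite (sum_by_blocks bsn (fun r => (\sum_(c < n K) A r c * x c) ^+ 2)).
  apply: eq_bigr => i _; apply: eq_big_nat => r hr.
  congr (_ ^+ 2); rewrite (sum_by_blocks bsn (fun c => A r c * x c)).
  apply: eq_bigr => j _; rewrite /near; case: (boolP (_ && _)) => [_|far].
    by rewrite mul1r.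
  rewrite mul0r /y big_nat_cond big1 // => c /andP [hc _].
  rewrite (bandA i j r c hr hc) ?mul0r //.
  by move: far; rewrite negb_and -!ltnNge => /orP [?|?]; apply/orP; [right|left]; lia.
apply: (@le_trans _ _ (\sum_(i < K) \sum_(n i <= r < n i.+1)
    D * \sum_(j < K) near i j * y i j r ^+ 2)).
  apply: ler_sum => i _; apply: ler_sum => r _.
  apply: le_trans (weighted_cauchy_schwarz (y i ^~ r) K (near_ge0 i)) _.
  apply: ler_wpM2r; last exact: sum_window_le.
  by apply: sumr_ge0 => j _; apply: mulr_ge0 => //; exact: sqr_ge0.
have -> : \sum_(i < K) \sum_(n i <= r < n i.+1) D * \sum_(j < K) near i j * y i j r ^+ 2 =
    D * \sum_(j < K) \sum_(i < K) near i j * \sum_(n i <= r < n i.+1) y i j r ^+ 2.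
  under eq_bigr => i _ do rewrite -mulr_sumr.
  rewrite -mulr_sumr; congr (D * _).
  rewrite (eq_bigr (fun i : 'I_K => \sum_(j < K) \sum_(n i <= r < n i.+1)
    near i j * y i j r ^+ 2)) => [|i _]; last by rewrite exchange_big.
  rewrite exchange_big; apply: eq_bigr => j _; apply: eq_bigr => i _.
  by rewrite mulr_sumr.
rewrite (sum_by_blocks bsn (fun c => x c ^+ 2)) -mulrA expr2 -mulrA.
apply: ler_wpM2l; first by rewrite ler0n.
rewrite !mulr_sumr; apply: ler_sum => j _.
apply: (@le_trans _ _ (\sum_(i < K) near i j * (Cb * nx j))).
  by apply: ler_sum => i _; apply: ler_wpM2l => //; exact: blockA.
rewrite -mulr_suml; apply: ler_wpM2r.
  by apply: mulr_ge0 => //; apply: sumr_ge0 => c _; exact: sqr_ge0.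
rewrite /near; under eq_bigr => i _ do rewrite andbC.
exact: sum_window_le.
Qed.

Lemma quad_block_diag A K x : (forall r s, blk r != blk s -> A r s = 0) ->
  \sum_(r < n K) \sum_(s < n K) x r * A r s * x s =
  \sum_(i < K) \sum_(n i <= r < n i.+1) x r * \sum_(n i <= s < n i.+1) A r s * x s.
Proof.
move=> A0; rewrite (sum_by_blocks bsn (fun r => \sum_(s < n K) x r * A r s * x s)).
apply: eq_bigr => i _; apply: eq_big_nat => r hr.
rewrite (sum_by_blocks bsn (fun s => x r * A r s * x s)) (bigD1 i) //= [X in _ + X]big1.
  by rewrite addr0 mulr_sumr; apply: eq_bigr => s _; rewrite mulrA.
move=> j ne_ji; rewrite big_nat_cond big1 // => s /andP [hs _].
rewrite A0 ?mulr0 ?mul0r // (block_ofE bsn hr) (block_ofE bsn hs).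
by apply: contra ne_ji => /eqP e; apply/eqP/val_inj.
Qed.

Lemma bounded_mx_block_diag A C : 0 <= C -> (forall r s, blk r != blk s -> A r s = 0) ->
  (forall i w, \sum_(n i <= r < n i.+1) (\sum_(n i <= s < n i.+1) A r s * w s) ^+ 2
     <= C * \sum_(n i <= s < n i.+1) w s ^+ 2) ->
  bounded_mx A.
Proof.
move=> C_ge0 A0 blockA; apply: (@bounded_mx_sec _ (1%:R ^+ 2 * C)).
apply: (@sec_bounded_banded _ 0) => // [i j r s hr hs far|i j w].
  apply: A0; rewrite (block_ofE bsn hr) (block_ofE bsn hs).
  by apply: contraTneq far => ->; rewrite subnn.
have [<-|ne_ij] := eqVneq i j; first exact: blockA.
rewrite big_nat_cond big1 => [|r /andP [hr _]].
  by apply: mulr_ge0 => //; apply: sumr_ge0 => s _; exact: sqr_ge0.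
rewrite big_nat_cond big1 ?expr0n // => s /andP [hs _].
by rewrite A0 ?mul0r // (block_ofE bsn hr) (block_ofE bsn hs).
Qed.

Lemma elliptic_mx_block_diag A c : 0 < c -> (forall r s, blk r != blk s -> A r s = 0) ->
  (forall i x, c * \sum_(n i <= r < n i.+1) x r ^+ 2 <=
     \sum_(n i <= r < n i.+1) x r * \sum_(n i <= s < n i.+1) A r s * x s) ->
  elliptic_mx A.
Proof.
move=> c_gt0 A0 blockA; apply: (elliptic_mx_sec c_gt0) => K x.
rewrite quad_block_diag // (sum_by_blocks bsn (fun r => x r ^+ 2)) mulr_sumr.
by apply: ler_sum => i _; exact: blockA.
Qed.

Definition restr j w c := if in_block n j c then w c else 0.

Lemma sum_restr j w (f : nat -> R) N : (n j.+1 <= N)%N ->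
  \sum_(c < N) f c * restr j w c = \sum_(n j <= c < n j.+1) f c * w c.
Proof.
move=> hN; rewrite (@sum_ord_trunc _ (fun c => f c * restr j w c) (n j.+1)) // => [|p hp].
  rewrite -(big_mkord xpredT (fun c => f c * restr j w c)).
  rewrite (@big_cat_nat _ _ _ (n j)) ?leq0n ?(leq_bound bsn) //= big_nat_cond big1.
    by rewrite add0r; apply: eq_big_nat => c hc; rewrite /restr /in_block hc.
  by move=> c /andP [/andP [_ hc] _]; rewrite /restr /in_block leqNgt hc mulr0.
by rewrite /restr /in_block ltnNge hp andbF mulr0.
Qed.

Lemma norm_restr j w N : (n j.+1 <= N)%N ->
  \sum_(c < N) restr j w c ^+ 2 = \sum_(n j <= c < n j.+1) w c ^+ 2.
Proof.
move=> hN; rewrite -(sum_restr w w hN); apply: eq_bigr => c _.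
by rewrite /restr; case: ifP; rewrite ?expr2 ?mulr0.
Qed.

End SectionNorms.

Section Estimates.
Variable R : realType.
Variable n : nat -> nat.
Hypothesis bsn : block_structure n.
Variable M : nat -> nat -> R.
Variable G : nat -> nat -> nat -> R.
Hypothesis MG : forall k, inv_on (n k) M (G k).
Variables CM c : R.
Hypothesis M_bounded : forall (N m : nat) (x : nat -> R),
  \sum_(i < m) (\sum_(j < N) M i j * x j) ^+ 2 <= CM * \sum_(j < N) x j ^+ 2.
Hypothesis c_gt0 : 0 < c.
Hypothesis M_elliptic : forall (N : nat) (x : nat -> R),
  c * \sum_(i < N) x i ^+ 2 <= \sum_(i < N) \sum_(j < N) x i * M i j * x j.
Implicit Types (x y w : nat -> R).

Local Notation blk := (block_of bsn).
Local Notation Lfac := (Lfac bsn M G).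
Local Notation Ufac := (Ufac bsn M G).
Local Notation Linv := (Linv bsn M G).
Local Notation Uinv := (Uinv bsn G).
Local Notation Dinv := (Dinv bsn G).
Local Notation restr := (restr n).

Lemma CM_ge0 : 0 <= CM.
Proof.
by have := M_bounded 1 0 (fun=> 1); rewrite big_ord0 big_ord1 expr1n mulr1.
Qed.

Lemma invc2_ge0 : 0 <= c ^- 2.
Proof. by rewrite invr_ge0 exprn_ge0 // ltW. Qed.

Definition Gmul k y p := \sum_(q < n k) G k p q * y q.

Lemma M_Gmul k y r : (r < n k)%N -> \sum_(p < n k) M r p * Gmul k y p = y r.
Proof.
move=> hr; rewrite /Gmul (sum_mulA (M r) (G k) y).
under eq_bigr => q _ do rewrite MG //.
exact: sum_deltal.
Qed.

(* [c |x|^2 <= <x, M x> = <x, y>] for [x = G k y], and [2 c <x, y> <= c^2 |x|^2 + |y|^2]. *)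
Lemma Gmul_bound k y :
  \sum_(p < n k) Gmul k y p ^+ 2 <= c ^- 2 * \sum_(q < n k) y q ^+ 2.
Proof.
set x := Gmul k y; set X := \sum_(p < n k) x p ^+ 2; set Y := \sum_(q < n k) y q ^+ 2.
set S := \sum_(i < n k) x i * y i.
have X_ge0 : 0 <= X by apply: sumr_ge0 => p _; exact: sqr_ge0.
have ell : c * X <= S.
  apply: le_trans (M_elliptic (n k) x) _; rewrite le_eqVlt; apply/orP; left; apply/eqP.
  apply: eq_bigr => i _; rewrite -[in RHS](M_Gmul y (ltn_ord i)) mulr_sumr.
  by apply: eq_bigr => j _; rewrite mulrA.
have amgm : 2 * c * S <= c ^+ 2 * X + Y.
  rewrite /S /X /Y mulr_sumr mulr_sumr -big_split /=; apply: ler_sum => i _.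
  rewrite -subr_ge0 (_ : _ - _ = (c * x i - y i) ^+ 2) ?sqr_ge0 //; ring.
have := ler_wpM2l (ltW c_gt0) ell.
by rewrite [_ * Y]mulrC ler_pdivlMr ?exprn_gt0 //; lra.
Qed.

Lemma Lfac_block j w r : \sum_(n j <= s < n j.+1) Lfac r s * w s =
  \sum_(q < n j.+1) M r q * Gmul j.+1 (restr j w) q.
Proof.
rewrite -(sum_restr bsn w (fun s => Lfac r s) (leqnn _)) /Gmul.
rewrite (sum_mulA (M r) (G j.+1) (restr j w)); apply: eq_bigr => s _.
rewrite /restr; case: ifP => [hs|_]; last by rewrite !mulr0.
by rewrite /Lfac (block_ofE bsn hs).
Qed.

Lemma Lfac_block_bound i j w :
  \sum_(n i <= r < n i.+1) (\sum_(n j <= s < n j.+1) Lfac r s * w s) ^+ 2 <=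
  CM * c ^- 2 * \sum_(n j <= s < n j.+1) w s ^+ 2.
Proof.
under eq_bigr => r _ do rewrite Lfac_block.
apply: le_trans (sum_nat_le_ord _ _ (fun r => sqr_ge0 _)) _.
apply: le_trans (M_bounded _ _ _) _; rewrite -mulrA; apply: ler_wpM2l; first exact: CM_ge0.
by rewrite -(norm_restr bsn w (leqnn _)); exact: Gmul_bound.
Qed.

(* For [r] in block [i], row [r] of [U] restricted to block column [j] is row [r]
   of [M] applied to [w_j - G i (M w_j)], where [w_j] is [w] restricted to block [j]. *)
Definition elim_vec i j w s :=
  restr j w s - ((s < n i)%N)%:R * Gmul i (fun p => \sum_(q < n j.+1) M p q * restr j w q) s.

Lemma Ufac_block i j w r N : (n i <= N)%N -> (n j.+1 <= N)%N -> blk r = i ->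
  \sum_(n j <= s < n j.+1) Ufac r s * w s = \sum_(s < N) M r s * elim_vec i j w s.
Proof.
move=> hiN hjN hr.
under eq_big_nat => s _ do rewrite /Ufac /multiplier hr mulrBl.
rewrite sumrB; under [RHS]eq_bigr => s _ do rewrite /elim_vec mulrBr.
rewrite sumrB (sum_restr bsn w (M r) hjN); congr (_ - _).
rewrite -(sum_restr bsn w (fun s => \sum_(p < n i) (\sum_(q < n i) M r q * G i q p) * M p s)
  (leqnn _)).
rewrite -(sum_mulA (fun p => \sum_(q < n i) M r q * G i q p) M (restr j w)).
rewrite -(sum_mulA (M r) (G i) (fun p => \sum_(q < n j.+1) M p q * restr j w q)).
under [RHS]eq_bigr => s _ do rewrite mulrCA.
by rewrite (sum_ltn_mask (fun s => M r s * Gmul i _ s) hiN).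
Qed.

Lemma elim_vec_norm i j w N : (n i <= N)%N -> (n j.+1 <= N)%N ->
  \sum_(s < N) elim_vec i j w s ^+ 2 <=
  (2 + 2 * (c ^- 2 * CM)) * \sum_(n j <= s < n j.+1) w s ^+ 2.
Proof.
move=> hiN hjN; set t := fun p => \sum_(q < n j.+1) M p q * restr j w q.
have sq_mask (b : bool) v : (b%:R * v) ^+ 2 = b%:R * v ^+ 2 :> R.
  by case: b; rewrite ?mul1r ?mul0r ?expr0n.
have sqrB_le (u v : R) : (u - v) ^+ 2 <= 2 * u ^+ 2 + 2 * v ^+ 2.
  by rewrite -subr_ge0 (_ : _ - _ = (u + v) ^+ 2) ?sqr_ge0 //; ring.
apply: (@le_trans _ _ (\sum_(s < N)
    (2 * restr j w s ^+ 2 + 2 * (((s < n i)%N)%:R * Gmul i t s) ^+ 2))).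
  by apply: ler_sum => s _; exact: sqrB_le.
rewrite big_split /= -!mulr_sumr (norm_restr bsn w hjN) [X in _ <= X]mulrDl.
apply: lerD => //; rewrite -mulrA; apply: ler_wpM2l => //.
rewrite (eq_bigr (fun s : 'I_N => ((s < n i)%N)%:R * Gmul i t s ^+ 2)) => [|s _].
  2: exact: sq_mask.
rewrite (sum_ltn_mask (fun s => Gmul i t s ^+ 2) hiN).
apply: le_trans (Gmul_bound i t) _; rewrite -mulrA.
apply: ler_wpM2l; first exact: invc2_ge0.
by rewrite -(norm_restr bsn w (leqnn _)); exact: M_bounded.
Qed.

Definition Ubound := CM * (2 + 2 * (c ^- 2 * CM)).

Lemma Ubound_ge0 : 0 <= Ubound.
Proof.
have := CM_ge0; have := invc2_ge0 => *.
by rewrite mulr_ge0 ?addr_ge0 ?mulr_ge0.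
Qed.

Lemma Ufac_block_bound i j w :
  \sum_(n i <= r < n i.+1) (\sum_(n j <= s < n j.+1) Ufac r s * w s) ^+ 2 <=
  Ubound * \sum_(n j <= s < n j.+1) w s ^+ 2.
Proof.
set N := n (i + j).+1.
have hiN : (n i <= N)%N by rewrite (leq_bound bsn) leqW // leq_addr.
have hjN : (n j.+1 <= N)%N by rewrite (leq_bound bsn) ltnS leq_addl.
rewrite (eq_big_nat _ _ (F2 := fun r => (\sum_(s < N) M r s * elim_vec i j w s) ^+ 2)).
  apply: le_trans (sum_nat_le_ord _ _ (fun r => sqr_ge0 _)) _.
  apply: le_trans (M_bounded _ _ _) _; rewrite -mulrA.
  by apply: ler_wpM2l; [exact: CM_ge0 | exact: elim_vec_norm].
by move=> r hr; rewrite (Ufac_block w hiN hjN (block_ofE bsn hr)).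
Qed.

Lemma M_elim_vec_lower i x r : (r < n i)%N ->
  \sum_(s < n i.+1) M r s * elim_vec i i x s = 0.
Proof.
move=> hr; rewrite /elim_vec; under eq_bigr => s _ do rewrite mulrBr mulrCA.
by rewrite sumrB (sum_ltn_mask (fun s => M r s * Gmul i _ s)) ?(leq_bound bsn) ?M_Gmul ?subrr.
Qed.

Lemma elim_vec_diag i x r : in_block n i r -> elim_vec i i x r = x r.
Proof.
move=> hr; case/andP: (hr) => lo _.
by rewrite /elim_vec /restr hr ltnNge lo mul0r subr0.
Qed.

(* The diagonal block [U(i,i)] is the Schur complement of [M(<i,<i)] in the
   leading section on [i+1] blocks, and [<x, U(i,i) x> = <z, M z>] for [z = elim_vec i i x]. *)
Lemma Ufac_block_elliptic i x : c * \sum_(n i <= r < n i.+1) x r ^+ 2 <=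
  \sum_(n i <= r < n i.+1) x r * \sum_(n i <= s < n i.+1) Ufac r s * x s.
Proof.
set z := elim_vec i i x.
have hi : (n i <= n i.+1)%N by rewrite (leq_bound bsn).
have quadE : \sum_(r < n i.+1) \sum_(s < n i.+1) z r * M r s * z s =
    \sum_(n i <= r < n i.+1) x r * \sum_(n i <= s < n i.+1) Ufac r s * x s.
  under eq_bigr => r _ do under eq_bigr => s _ do rewrite -mulrA.
  under eq_bigr => r _ do rewrite -mulr_sumr.
  rewrite -(big_mkord xpredT (fun r => z r * \sum_(s < n i.+1) M r s * z s)).
  rewrite (@big_cat_nat _ _ _ (n i)) //= big_nat_cond big1 ?add0r
    => [|r /andP [/andP [_ hr] _]]; last by rewrite M_elim_vec_lower // mulr0.
  apply: eq_big_nat => r hr.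
  by rewrite /z elim_vec_diag // (Ufac_block x hi (leqnn _) (block_ofE bsn hr)).
rewrite -quadE; apply: le_trans (M_elliptic _ z); apply: ler_wpM2l; first exact: ltW.
rewrite (eq_big_nat _ _ (F2 := fun r => z r ^+ 2)) => [|r hr]; last first.
  by rewrite /z elim_vec_diag.
exact: sum_nat_le_ord (fun r => sqr_ge0 _).
Qed.

(* [<x, G(i,i) x> = <z, M z>] for [z = G (i+1) x], and [|x|^2 = |M z|^2 <= CM |z|^2]. *)
Lemma Gdiag_block_elliptic i x : c / (CM + 1) * \sum_(n i <= r < n i.+1) x r ^+ 2 <=
  \sum_(n i <= r < n i.+1) x r * \sum_(n i <= s < n i.+1) G i.+1 r s * x s.
Proof.
set w := restr i x; set z := Gmul i.+1 w.
have -> : \sum_(n i <= r < n i.+1) x r * \sum_(n i <= s < n i.+1) G i.+1 r s * x s =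
    \sum_(r < n i.+1) \sum_(s < n i.+1) z r * M r s * z s.
  rewrite (eq_bigr (fun r : 'I_(n i.+1) => z r * w r)) => [|r _]; last first.
    rewrite -(M_Gmul w (ltn_ord r)) mulr_sumr.
    by apply: eq_bigr => s _; rewrite mulrA.
  rewrite /w (sum_restr bsn x z (leqnn _)).
  apply: eq_big_nat => r _; rewrite mulrC; congr (_ * _).
  by rewrite /z /Gmul (sum_restr bsn x (G i.+1 r) (leqnn _)).
have norm_x : \sum_(n i <= r < n i.+1) x r ^+ 2 <= CM * \sum_(r < n i.+1) z r ^+ 2.
  rewrite -(norm_restr bsn x (leqnn _)).
  rewrite (eq_bigr (fun r : 'I_(n i.+1) => (\sum_(s < n i.+1) M r s * z s) ^+ 2)) => [|r _].
    exact: M_bounded.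
  by rewrite /z M_Gmul.
have := M_elliptic (n i.+1) z; move: norm_x.
set X := \sum_(n i <= r < n i.+1) _; set Q := \sum_(r < n i.+1) _; set Z := \sum_(r < _) _.
move=> norm_x ell_z; have Z_ge0 : 0 <= Z by apply: sumr_ge0 => r _; exact: sqr_ge0.
have e1 : 0 <= c * (CM * Z - X) by rewrite mulr_ge0 ?subr_ge0 // ltW.
have e2 : 0 <= CM * (Q - c * Z) by rewrite mulr_ge0 ?subr_ge0 ?CM_ge0.
have e3 := mulr_ge0 (ltW c_gt0) Z_ge0.
have CM_ge0 := CM_ge0.
by rewrite mulrAC ler_pdivrMr; lra.
Qed.

Lemma Gdiag_block_bound i w :
  \sum_(n i <= r < n i.+1) (\sum_(n i <= s < n i.+1) G i.+1 r s * w s) ^+ 2 <=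
  c ^- 2 * \sum_(n i <= s < n i.+1) w s ^+ 2.
Proof.
rewrite (eq_big_nat _ _ (F2 := fun r => Gmul i.+1 (restr i w) r ^+ 2)) => [|r _]; last first.
  by rewrite /Gmul (sum_restr bsn w (G i.+1 r) (leqnn _)).
apply: le_trans (sum_nat_le_ord _ _ (fun r => sqr_ge0 _)) _.
by rewrite -(norm_restr bsn w (leqnn _)); exact: Gmul_bound.
Qed.

Lemma sec_bounded_Lfac b : block_banded n b M ->
  sec_bounded n Lfac (((2 * b).+1)%:R ^+ 2 * (CM * c ^- 2)).
Proof.
move=> bandM; apply: (sec_bounded_banded bsn _ _ Lfac_block_bound).
  exact: block_banded_Lfac.
exact: mulr_ge0 CM_ge0 invc2_ge0.
Qed.

Lemma sec_bounded_Ufac b : block_banded n b M ->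
  sec_bounded n Ufac (((2 * b).+1)%:R ^+ 2 * Ubound).
Proof.
move=> bandM; apply: (sec_bounded_banded bsn _ Ubound_ge0 Ufac_block_bound).
exact: block_banded_Ufac.
Qed.

Lemma sec_bounded_Linv C : sec_bounded n Ufac C -> sec_bounded n Linv (C * c ^- 2).
Proof.
move=> secU K x; have C_ge0 := sec_bounded_ge0 bsn secU.
rewrite (eq_bigr (fun r : 'I_(n K) => (\sum_(p < n K) Ufac r p * Gmul K x p) ^+ 2)) => [|r _].
  apply: le_trans (secU K (Gmul K x)) _; rewrite -mulrA.
  by apply: ler_wpM2l => //; exact: Gmul_bound.
rewrite (sum_mulA (Ufac r) (G K) x); congr (_ ^+ 2); apply: eq_bigr => s _.
by rewrite (Linv_section bsn MG (ltn_ord r) (ltn_ord s)).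
Qed.

Lemma sec_bounded_Uinv C : sec_bounded n Lfac C -> sec_bounded n Uinv (c ^- 2 * C).
Proof.
move=> secL K x; pose y p := \sum_(s < n K) Lfac p s * x s.
rewrite (eq_bigr (fun r : 'I_(n K) => Gmul K y r ^+ 2)) => [|r _].
  apply: le_trans (Gmul_bound K y) _; rewrite -mulrA.
  by apply: ler_wpM2l; [exact: invc2_ge0 | exact: secL].
rewrite /Gmul /y (sum_mulA (G K r) Lfac x); congr (_ ^+ 2); apply: eq_bigr => s _.
by rewrite (Uinv_section bsn MG (ltn_ord r) (ltn_ord s)).
Qed.

Lemma bounded_diag D : block_diag_part n Ufac D -> bounded_mx D.
Proof.
move=> DU; apply: (@bounded_mx_block_diag _ _ bsn _ _ Ubound_ge0) => [r s ne_rs|i w].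
  by rewrite (block_diag_partE DU) (negbTE ne_rs).
apply: le_trans (Ufac_block_bound i i w); rewrite le_eqVlt; apply/orP; left.
apply/eqP/eq_big_nat => r hr; congr (_ ^+ 2); apply: eq_big_nat => s hs.
by rewrite (block_diag_partE DU) (block_ofE bsn hr) (block_ofE bsn hs) eqxx.
Qed.

Lemma elliptic_diag D : block_diag_part n Ufac D -> elliptic_mx D.
Proof.
move=> DU; apply: (@elliptic_mx_block_diag _ _ bsn _ _ c_gt0) => [r s ne_rs|i x].
  by rewrite (block_diag_partE DU) (negbTE ne_rs).
apply: le_trans (Ufac_block_elliptic i x) _; rewrite le_eqVlt; apply/orP; left.
apply/eqP/eq_big_nat => r hr; congr (_ * _); apply: eq_big_nat => s hs.
by rewrite (block_diag_partE DU) (block_ofE bsn hr) (block_ofE bsn hs) eqxx.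
Qed.

Lemma Dinv_block i r s : in_block n i r -> in_block n i s -> Dinv r s = G i.+1 r s.
Proof. by move=> hr hs; rewrite /Dinv (block_ofE bsn hr) (block_ofE bsn hs) eqxx mul1r. Qed.

Lemma bounded_Dinv : bounded_mx Dinv.
Proof.
apply: (@bounded_mx_block_diag _ _ bsn _ _ invc2_ge0) => [r s ne_rs|i w].
  by rewrite /Dinv (negbTE ne_rs) mul0r.
apply: le_trans (Gdiag_block_bound i w); rewrite le_eqVlt; apply/orP; left.
apply/eqP/eq_big_nat => r hr; congr (_ ^+ 2); apply: eq_big_nat => s hs.
by rewrite (Dinv_block hr hs).
Qed.

Lemma elliptic_Dinv : elliptic_mx Dinv.
Proof.
have CM1_gt0 : 0 < CM + 1 by rewrite ltr_wpDl ?CM_ge0.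
apply: (@elliptic_mx_block_diag _ _ bsn _ _ (divr_gt0 c_gt0 CM1_gt0)) => [r s ne_rs|i x].
  by rewrite /Dinv (negbTE ne_rs) mul0r.
apply: le_trans (Gdiag_block_elliptic i x) _; rewrite le_eqVlt; apply/orP; left.
apply/eqP/eq_big_nat => r hr; congr (_ * _); apply: eq_big_nat => s hs.
by rewrite (Dinv_block hr hs).
Qed.

End Estimates.

Theorem lemma3p7 (R : realType) (M : nat -> nat -> R) (n : nat -> nat) (b0 : nat) :
  bounded_mx M -> elliptic_mx M -> block_structure n -> block_banded n b0 M ->
  exists L U : nat -> nat -> R,
    [/\ block_lower n L, block_upper n U, unit_diag_blocks n L & mx_prod_is L U M] /\
    [/\ block_banded n b0 L, block_banded n b0 U, bounded_mx L, bounded_mx U &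
        exists Linv Uinv : nat -> nat -> R,
          [/\ inverse_mx L Linv, inverse_mx U Uinv, bounded_mx Linv & bounded_mx Uinv]] /\
    (forall D : nat -> nat -> R, block_diag_part n U D ->
       [/\ bounded_mx D, elliptic_mx D &
           exists Dinv : nat -> nat -> R,
             [/\ inverse_mx D Dinv, bounded_mx Dinv & elliptic_mx Dinv]]).
Proof.
move=> [CM M_bnd] [c [c_gt0 M_ell]] bsn bandM.
have [G MG] := boolp.choice (fun k => elliptic_inv_on c_gt0 (M_ell (n k))).
have secL := sec_bounded_Lfac bsn MG M_bnd c_gt0 M_ell bandM.
have secU := sec_bounded_Ufac bsn MG M_bnd c_gt0 M_ell bandM.
exists (Lfac bsn M G), (Ufac bsn M G); split; [|split].
- split; [exact: block_lower_Lfac | exact: block_upper_Ufac | exact: unit_diag_Lfac |].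
  exact: mx_prod_Lfac_Ufac.
- split.
  + exact: (block_banded_Lfac bsn MG bandM : block_banded _ _ _).
  + exact: (block_banded_Ufac bsn MG bandM : block_banded _ _ _).
  + exact: (bounded_mx_sec bsn secL).
  + exact: (bounded_mx_sec bsn secU).
  + exists (Linv bsn M G), (Uinv bsn G); split; [exact: inverse_Lfac | exact: inverse_Ufac | |].
    * exact: (bounded_mx_sec bsn (sec_bounded_Linv MG c_gt0 M_ell secU)).
    * exact: (bounded_mx_sec bsn (sec_bounded_Uinv MG c_gt0 M_ell secL)).
- move=> D DU; split.
  + exact: (bounded_diag MG M_bnd c_gt0 M_ell DU).
  + exact: (elliptic_diag MG c_gt0 M_ell DU).
  + exists (Dinv bsn G); split; first exact: (inverse_diag MG DU).
    * exact: (bounded_Dinv bsn MG c_gt0 M_ell).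
    * exact: (elliptic_Dinv bsn MG M_bnd c_gt0 M_ell).
Qed.
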